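(* Let $K\geqslant1$ and $f\in\mathrm{HQR}_K(\mathbb{U},\mathbb{S})$ with $f(0)=0$. Then $$|f(z)|\leqslant\frac{4}{\pi}K\operatorname{artanh}|z|\quad\text{for all } z\in\mathbb{U},$$ and this inequality is sharp for each point $z\in\mathbb{U}$ (for every $z\in\mathbb{U}$ there is $g\in\mathrm{HQR}_K(\mathbb{U},\mathbb{S})$ with $g(0)=0$ and $|g(z)|=\frac{4}{\pi}K\operatorname{artanh}|z|$).
   Context: $\mathbb{U}=\{z\in\mathbb{C}:|z|<1\}$, $\mathbb{S}=\{z\in\mathbb{C}:-1<\operatorname{Re} z<1\}$. For domains $D,G\subset\mathbb{C}$, $\mathrm{HQR}_K(D,G)$ denotes the class of complex-valued harmonic $C^1$ maps $f:D\to G$ that are sense-preserving $K$-quasiregular, i.e. $|f_z(z)|>|f_{\bar z}(z)|$ and $\frac{|f_z(z)|+|f_{\bar z}(z)|}{|f_z(z)|-|f_{\bar z}(z)|}\leqslant K$ for all $z\in D$. *)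

From Stdlib Require Import Reals.
From Coquelicot Require Import Coquelicot.
Open Scope R_scope.

Definition unit_disk (z : C) : Prop := Cmod z < 1.
Definition strip (z : C) : Prop := -1 < fst z < 1.

Definition dx (h : C -> R) (p : C) : R := Derive (fun t => h (t, snd p)) (fst p).
Definition dy (h : C -> R) (p : C) : R := Derive (fun t => h (fst p, t)) (snd p).

Definition C1_on (D : C -> Prop) (h : C -> R) : Prop :=
  forall p, D p ->
    ex_derive (fun t => h (t, snd p)) (fst p) /\
    ex_derive (fun t => h (fst p, t)) (snd p) /\
    continuous h p /\ continuous (dx h) p /\ continuous (dy h) p.

Definition C2_on (D : C -> Prop) (h : C -> R) : Prop :=
  C1_on D h /\ C1_on D (dx h) /\ C1_on D (dy h).

Definition harmonic_on (D : C -> Prop) (h : C -> R) : Prop :=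
  C2_on D h /\ forall p, D p -> dx (dx h) p + dy (dy h) p = 0.

Definition re_part (f : C -> C) : C -> R := fun p => fst (f p).
Definition im_part (f : C -> C) : C -> R := fun p => snd (f p).

(* f_z = (f_x - i f_y)/2 and f_{\bar z} = (f_x + i f_y)/2, f = u + i v *)
Definition f_z (f : C -> C) (p : C) : C :=
  let u := re_part f in let v := im_part f in
  ((dx u p + dy v p) / 2, (dx v p - dy u p) / 2).
Definition f_zbar (f : C -> C) (p : C) : C :=
  let u := re_part f in let v := im_part f in
  ((dx u p - dy v p) / 2, (dx v p + dy u p) / 2).

Definition HQR (K : R) (D G : C -> Prop) (f : C -> C) : Prop :=
  (forall z, D z -> G (f z)) /\
  harmonic_on D (re_part f) /\ harmonic_on D (im_part f) /\
  C1_on D (re_part f) /\ C1_on D (im_part f) /\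
  (forall z, D z ->
     Cmod (f_zbar f z) < Cmod (f_z f z) /\
     (Cmod (f_z f z) + Cmod (f_zbar f z)) / (Cmod (f_z f z) - Cmod (f_zbar f z)) <= K).

Definition artanh (x : R) : R := ln ((1 + x) / (1 - x)) / 2.

(* The real part [u] of [f] is a harmonic function with [|u| < 1]. Composing it with a disk
   automorphism [phi] centred at [w] and taking the first Fourier coefficient
   [m(r) = RInt (u (phi (r e^it)) cos t)] over a period, harmonicity makes [m(r) / r] constant
   while [|m(r)| <= RInt |cos| = 4]; this gives the sharp gradient estimate
   [PI (1 - |w|^2) |grad u (w)| <= 4]. Quasiregularity controls the whole differential by
   [|f_z| + |f_zbar| <= K (|f_z| - |f_zbar|) <= K |grad u|], and integrating along the radius
   from [0] to [z] yields [|f z| <= 4 K / PI * artanh |z|]. Equality holds for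
   [g = Re h + i K Im h], where [h = -(2 i / PI) log ((1 + w) / (1 - w))] maps the disk
   conformally onto the strip, after a rotation putting [z] on the positive real axis. *)

From Stdlib Require Import Reals Lra.
From Coquelicot Require Import Coquelicot.
Open Scope R_scope.

(* Coquelicot's generic lemmas state equalities in the carrier of a structure, which [ring]
   recognises only once retyped at [R]. *)
Ltac real_eq := match goal with |- ?a = ?b => change (@eq R a b) end.

Lemma is_derive_eq (f : R -> R) (x l l' : R) : is_derive f x l -> l = l' -> is_derive f x l'.
Proof. now intros H <-. Qed.

Lemma is_derive_Rplus (f g : R -> R) (x a b : R) :
  is_derive f x a -> is_derive g x b -> is_derive (fun t => f t + g t) x (a + b).
Proof. intros; now apply (is_derive_plus f g). Qed.

Lemma is_derive_Rminus (f g : R -> R) (x a b : R) :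
  is_derive f x a -> is_derive g x b -> is_derive (fun t => f t - g t) x (a - b).
Proof. intros; now apply (is_derive_minus f g). Qed.

Lemma is_derive_Ropp (f : R -> R) (x a : R) :
  is_derive f x a -> is_derive (fun t => - f t) x (- a).
Proof. intros; now apply (is_derive_opp f). Qed.

Lemma is_derive_Rmult (f g : R -> R) (x a b : R) :
  is_derive f x a -> is_derive g x b -> is_derive (fun t => f t * g t) x (a * g x + f x * b).
Proof. intros; apply (is_derive_mult f g); auto; intros; apply Rmult_comm. Qed.

Lemma is_derive_mult_const_r (f : R -> R) (k x a : R) :
  is_derive f x a -> is_derive (fun t => f t * k) x (a * k).
Proof.
  intros H. apply (is_derive_ext (fun t => k * f t)); [intros; apply Rmult_comm|].
  rewrite Rmult_comm. now apply is_derive_scal.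
Qed.

Lemma is_derive_artanh (x : R) : -1 < x < 1 -> is_derive artanh x (/ (1 - x * x)).
Proof.
  intros Hx. unfold artanh. auto_derive.
  - repeat split; try lra. apply Rdiv_lt_0_compat; lra.
  - field. repeat split; nra.
Qed.

Lemma artanh_0 : artanh 0 = 0.
Proof. unfold artanh. rewrite Rplus_0_r, Rminus_0_r, Rdiv_1_r, ln_1. field. Qed.

Lemma locally_open_interval (lo hi r : R) : lo < r < hi -> locally r (fun x => lo < x < hi).
Proof.
  intros Hr. assert (Hd : 0 < Rmin (hi - r) (r - lo)) by (apply Rmin_pos; lra).
  exists (mkposreal _ Hd). intros y Hy. simpl in Hy.
  change (Rabs (y - r) < Rmin (hi - r) (r - lo)) in Hy.
  pose proof (Rmin_l (hi - r) (r - lo)). pose proof (Rmin_r (hi - r) (r - lo)).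
  apply Rabs_lt_between in Hy. lra.
Qed.

Lemma eq_of_is_derive_0 (g : R -> R) (a b : R) :
  (forall x, a < x < b -> is_derive g x 0) -> forall x y, a < x < b -> a < y < b -> g x = g y.
Proof.
  intros Hd x y Hx Hy.
  assert (Hin : forall c, Rmin x y <= c <= Rmax x y -> a < c < b).
  { intros c Hc. pose proof (Rmin_glb_lt x y a ltac:(lra) ltac:(lra)).
    pose proof (Rmax_lub_lt x y b ltac:(lra) ltac:(lra)). lra. }
  destruct (MVT_gen g x y (fun _ => 0)) as [c [_ Hc]].
  - intros c Hc. apply Hd, Hin. lra.
  - intros c Hc. apply continuity_pt_filterlim, (ex_derive_continuous (V := R_NormedModule)).
    eexists. apply Hd, Hin, Hc.
  - lra.
Qed.

Lemma increment_le_of_derive_le (h g h' g' : R -> R) :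
  (forall t, 0 <= t <= 1 -> is_derive h t (h' t) /\ is_derive g t (g' t) /\ h' t <= g' t) ->
  h 1 - h 0 <= g 1 - g 0.
Proof.
  intros Hd.
  assert (Hhg : forall t, 0 <= t <= 1 -> is_derive (fun t => h t - g t) t (h' t - g' t)).
  { intros t Ht. destruct (Hd t Ht) as (Hh & Hg & _). now apply is_derive_Rminus. }
  destruct (MVT_gen (fun t => h t - g t) 0 1 (fun t => h' t - g' t)) as [c [Hc Hmvt]].
  - intros t Ht. rewrite Rmin_left, Rmax_right in Ht by lra. apply Hhg. lra.
  - intros t Ht. rewrite Rmin_left, Rmax_right in Ht by lra.
    apply continuity_pt_filterlim, (ex_derive_continuous (V := R_NormedModule) (fun t => h t - g t)).
    eexists. now apply Hhg.
  - rewrite Rmin_left, Rmax_right in Hc by lra. destruct (Hd c Hc) as (_ & _ & Hle). lra.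
Qed.

Lemma is_derive_0_of_linear_right (g : R -> R) (l k : R) :
  is_derive g 0 l -> g 0 = 0 -> (forall r, 0 < r < 1 -> g r = k * r) -> l = k.
Proof.
  intros Hd H0 Hlin. apply is_derive_Reals in Hd.
  destruct (Req_dec l k) as [|Hne]; [assumption|exfalso].
  destruct (Hd (Rabs (k - l))) as [d Hdd]; [apply Rabs_pos_lt; lra|].
  pose proof (cond_pos d) as Hd0.
  set (h := Rmin (d / 2) (1 / 2)).
  assert (Hh : 0 < h <= 1 / 2) by (split; [apply Rmin_pos; lra | apply Rmin_r]).
  assert (Hhd : h < d) by (pose proof (Rmin_l (d / 2) (1 / 2)); unfold h; lra).
  specialize (Hdd h ltac:(lra) ltac:(rewrite Rabs_pos_eq; lra)).
  rewrite Rplus_0_l, H0, Hlin, Rminus_0_r in Hdd by lra.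
  replace (k * h / h) with k in Hdd by (field; lra). lra.
Qed.

Lemma le_of_linear_bound (k M : R) : 0 <= M -> (forall r, 0 < r < 1 -> k * r <= M) -> k <= M.
Proof.
  intros HM Hb. destruct (Rle_dec k M) as [|Hk]; [assumption|exfalso].
  assert (Hr : 0 <= M / k < 1).
  { split; [apply Rdiv_le_0_compat; lra |]. apply Rmult_lt_reg_r with k; [lra|].
    unfold Rdiv. rewrite Rmult_assoc, Rinv_l; lra. }
  specialize (Hb ((1 + M / k) / 2) ltac:(lra)).
  replace (k * ((1 + M / k) / 2)) with ((k + M) / 2) in Hb by (field; lra). lra.
Qed.

Lemma RInt_antiderivative (F f : R -> R) (a b : R) : a <= b ->
  (forall x, a <= x <= b -> is_derive F x (f x)) -> (forall x, a <= x <= b -> continuous f x) ->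
  RInt f a b = F b - F a.
Proof.
  intros Hab Hd Hc. apply is_RInt_unique, (is_RInt_derive F f);
    intros x Hx; rewrite Rmin_left, Rmax_right in Hx by lra; auto.
Qed.

Lemma RInt_lin_comb (f g : R -> R) (a b x y : R) : ex_RInt f a b -> ex_RInt g a b ->
  RInt (fun t => x * f t - y * g t) a b = x * RInt f a b - y * RInt g a b.
Proof.
  intros Hf Hg. apply is_RInt_unique.
  apply (is_RInt_minus (V := R_NormedModule) (fun t => x * f t) (fun t => y * g t));
    apply (is_RInt_scal (V := R_NormedModule)), (RInt_correct (V := R_CompleteNormedModule)); assumption.
Qed.

Lemma continuous_cos (x : R) : continuous cos x.
Proof. apply continuity_pt_filterlim, continuity_cos. Qed.

Lemma RInt_abs_cos : RInt (fun t => Rabs (cos t)) 0 (2 * PI) = 4.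
Proof.
  pose proof PI_RGT_0 as HPI.
  assert (Hex : forall a b, ex_RInt (fun t => Rabs (cos t)) a b).
  { intros a b. apply (ex_RInt_continuous (V := R_CompleteNormedModule)). intros x _.
    apply (continuous_comp cos Rabs); [apply continuous_cos | apply continuous_Rabs]. }
  assert (Hsin : forall a b, a <= b -> RInt cos a b = sin b - sin a).
  { intros a b Hab. apply RInt_antiderivative; [lra | | intros; apply continuous_cos].
    intros x _. apply is_derive_Reals, derivable_pt_lim_sin. }
  rewrite <- (RInt_Chasles _ 0 (PI / 2) (2 * PI)), <- (RInt_Chasles _ (PI / 2) (3 * (PI / 2)) (2 * PI))
    by apply Hex.
  rewrite (RInt_ext _ cos 0 (PI / 2)), (RInt_ext _ (fun t => - cos t) (PI / 2) (3 * (PI / 2))),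
    (RInt_ext _ cos (3 * (PI / 2)) (2 * PI)).
  - rewrite !Hsin by lra.
    rewrite (RInt_antiderivative (fun t => - sin t));
      [| lra | | intros; apply (continuous_opp cos), continuous_cos].
    + rewrite sin_PI2, sin_0, sin_2PI, sin_3PI2. cbn. ring.
    + intros x _. apply (is_derive_opp sin), is_derive_Reals, derivable_pt_lim_sin.
  - intros x Hx. rewrite Rmin_left, Rmax_right in Hx by lra. apply Rabs_pos_eq.
    replace x with ((x - 2 * PI) + 2 * INR 1 * PI) by (simpl; ring). rewrite cos_period.
    apply cos_ge_0; lra.
  - intros x Hx. rewrite Rmin_left, Rmax_right in Hx by lra. apply Rabs_left1, cos_le_0; lra.
  - intros x Hx. rewrite Rmin_left, Rmax_right in Hx by lra. apply Rabs_pos_eq, cos_ge_0; lra.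
Qed.

Lemma Cmod_sqr (x y : R) : Cmod (x, y) * Cmod (x, y) = x * x + y * y.
Proof. unfold Cmod; simpl. rewrite !Rmult_1_r, sqrt_sqrt; nra. Qed.

Lemma unit_disk_iff (x y : R) : unit_disk (x, y) <-> x * x + y * y < 1.
Proof.
  unfold unit_disk. rewrite <- Cmod_sqr. pose proof (Cmod_ge_0 (x, y)). split; intros; nra.
Qed.

Lemma Cmod_le_Rabs_plus (a b : R) : Cmod (a, b) <= Rabs a + Rabs b.
Proof.
  unfold Cmod; simpl. pose proof (Rabs_pos a). pose proof (Rabs_pos b).
  rewrite <- (sqrt_pow2 (Rabs a + Rabs b)) by lra.
  apply sqrt_le_1_alt. pose proof (pow2_abs a). pose proof (pow2_abs b). simpl in *. nra.
Qed.

Lemma Cmod_scale (a x y : R) : Cmod (a * x, a * y) = Rabs a * Cmod (x, y).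
Proof.
  replace (a * x, a * y) with (Cmult (a, 0) (x, y)) by (unfold Cmult; simpl; f_equal; ring).
  rewrite Cmod_mult. f_equal. apply (Cmod_R a).
Qed.

Lemma Cmod_0_l (b : R) : Cmod (0, b) = Rabs b.
Proof. unfold Cmod; simpl. rewrite <- sqrt_Rsqr_abs. f_equal. unfold Rsqr. ring. Qed.

Lemma dot_le_Cmod (e1 e2 x y : R) : e1 * e1 + e2 * e2 = 1 -> e1 * x + e2 * y <= Cmod (x, y).
Proof.
  intros He. pose proof (Cmod_sqr x y). pose proof (Cmod_ge_0 (x, y)).
  destruct (Rle_dec (e1 * x + e2 * y) 0); [lra|].
  apply Rsqr_incr_0_var; [unfold Rsqr | assumption].
  assert (Id : (e1 * x + e2 * y) * (e1 * x + e2 * y) + (e1 * y - e2 * x) * (e1 * y - e2 * x)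
               = (x * x + y * y) * (e1 * e1 + e2 * e2)) by ring.
  pose proof (Rle_0_sqr (e1 * y - e2 * x)). unfold Rsqr in *. nra.
Qed.

Lemma exists_unit_aligned (x y : R) :
  exists c s, c * c + s * s = 1 /\ c * x + s * y = Cmod (x, y) /\ - s * x + c * y = 0.
Proof.
  pose proof (Cmod_sqr x y) as Hr2. pose proof (Cmod_ge_0 (x, y)).
  destruct (Req_dec (Cmod (x, y)) 0) as [Z|NZ].
  - exists 1, 0. rewrite Z in *. assert (x = 0) by nra. assert (y = 0) by nra. subst.
    split; [ring | split; ring].
  - exists (x / Cmod (x, y)), (y / Cmod (x, y)). split; [|split].
    + replace (x / Cmod (x, y) * (x / Cmod (x, y)) + y / Cmod (x, y) * (y / Cmod (x, y)))
        with ((x * x + y * y) / (Cmod (x, y) * Cmod (x, y))) by (field; exact NZ).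
      rewrite <- Hr2. field. exact NZ.
    + replace (x / Cmod (x, y) * x + y / Cmod (x, y) * y) with ((x * x + y * y) / Cmod (x, y))
        by (field; exact NZ).
      rewrite <- Hr2. field. exact NZ.
    + field. exact NZ.
Qed.

Lemma unit_disk_locally_2d (x y : R) : unit_disk (x, y) -> locally_2d (fun a b => unit_disk (a, b)) x y.
Proof.
  unfold unit_disk; intros H.
  assert (Hd : 0 < (1 - Cmod (x, y)) / 2) by lra.
  exists (mkposreal _ Hd). simpl. intros a b Ha Hb.
  replace (a, b) with (Cplus (x, y) (a - x, b - y)) by (unfold Cplus; simpl; f_equal; ring).
  eapply Rle_lt_trans; [apply Cmod_triangle|].
  pose proof (Cmod_le_Rabs_plus (a - x) (b - y)).
  lra.
Qed.

Lemma unit_disk_locally (x y : R) : unit_disk (x, y) -> locally (x, y) unit_disk.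
Proof.
  intros H. apply unit_disk_locally_2d, locally_2d_locally in H.
  eapply filter_imp; [|exact H]. now intros [a b].
Qed.

Lemma derivable_pt_lim_remainder (f : R -> R) (y l : R) (eps : posreal) :
  derivable_pt_lim f y l ->
  exists d : posreal, forall v, Rabs (v - y) < d ->
    Rabs (f v - f y - l * (v - y)) <= eps * Rabs (v - y).
Proof.
  intros H. destruct (H eps (cond_pos eps)) as [d Hd].
  exists d. intros v Hv.
  destruct (Req_dec v y) as [->|Hne].
  { rewrite !Rminus_diag, Rmult_0_r, Rminus_0_r, Rabs_R0. lra. }
  specialize (Hd (v - y) ltac:(lra) Hv). replace (y + (v - y)) with v in Hd by ring.
  replace (f v - f y - l * (v - y)) with (((f v - f y) / (v - y) - l) * (v - y)) by (field; lra).
  rewrite Rabs_mult. apply Rmult_le_compat_r; [apply Rabs_pos | lra].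
Qed.

(* The [x]-increment is handled by the mean value theorem. *)
Lemma differentiable_pt_lim_of_partials (f : R -> R -> R) (x y : R) :
  locally_2d (fun u v => ex_derive (fun z => f z v) u) x y ->
  continuity_2d_pt (fun u v => Derive (fun z => f z v) u) x y ->
  ex_derive (fun z => f x z) y ->
  differentiable_pt_lim f x y (Derive (fun z => f z y) x) (Derive (fun z => f x z) y).
Proof.
  intros [d2 Hex] Hcont Hy eps.
  set (e2 := mkposreal (eps / 2) ltac:(destruct eps; simpl; lra)).
  destruct (Hcont e2) as [d1 Hd1].
  apply Derive_correct, is_derive_Reals in Hy.
  destruct (derivable_pt_lim_remainder _ _ _ e2 Hy) as [d3 Hd3].
  assert (Hd : 0 < Rmin d1 (Rmin d2 d3))
    by (destruct d1, d2, d3; simpl; repeat apply Rmin_pos; lra).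
  exists (mkposreal _ Hd). simpl. intros u v Hu Hv.
  pose proof (Rmin_l d1 (Rmin d2 d3)). pose proof (Rmin_r d1 (Rmin d2 d3)).
  pose proof (Rmin_l d2 d3). pose proof (Rmin_r d2 d3).
  destruct (MVT_cor4 (fun z => f z v) (fun c => Derive (fun z => f z v) c) x (Rabs (u - x)))
    with (b := u) as [c [Hmvt Hc]]; [|lra|].
  { intros c Hc. apply Derive_correct, Hex; lra. }
  specialize (Hd1 c v ltac:(lra) ltac:(lra)). specialize (Hd3 v ltac:(lra)). simpl in Hd1, Hd3.
  replace (f u v - f x y - (Derive (fun z => f z y) x * (u - x) + Derive (fun z => f x z) y * (v - y)))
    with ((Derive (fun z => f z v) c - Derive (fun z => f z y) x) * (u - x)
          + (f x v - f x y - Derive (fun z => f x z) y * (v - y))) by lra.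
  eapply Rle_trans; [apply Rabs_triang|]. rewrite Rabs_mult.
  pose proof (Rmax_l (Rabs (u - x)) (Rabs (v - y))). pose proof (Rmax_r (Rabs (u - x)) (Rabs (v - y))).
  pose proof (Rabs_pos (u - x)).
  assert (Rabs (Derive (fun z => f z v) c - Derive (fun z => f z y) x) * Rabs (u - x)
          <= eps / 2 * Rabs (u - x)) by (apply Rmult_le_compat_r; lra).
  destruct eps as [e He]; simpl in *. nra.
Qed.

Lemma differentiable_pt_lim_of_is_derive (F Fx Fy : R -> R -> R) (X Y : R) :
  locally_2d (fun x y =>
    is_derive (fun x => F x y) x (Fx x y) /\ is_derive (fun y => F x y) y (Fy x y)) X Y ->
  continuity_2d_pt Fx X Y -> differentiable_pt_lim F X Y (Fx X Y) (Fy X Y).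
Proof.
  intros [d Hd] Hc.
  assert (Hd0 : is_derive (fun x => F x Y) X (Fx X Y) /\ is_derive (fun y => F X y) Y (Fy X Y)).
  { apply Hd; rewrite Rminus_diag, Rabs_R0; apply cond_pos. }
  destruct Hd0 as [Hx Hy].
  assert (Ex : Derive (fun z => F z Y) X = Fx X Y) by now apply is_derive_unique.
  assert (Ey : Derive (fun z => F X z) Y = Fy X Y) by now apply is_derive_unique.
  rewrite <- Ex, <- Ey.
  apply differentiable_pt_lim_of_partials; [| | eexists; apply Hy].
  - exists d. intros u v Hu Hv. eexists. exact (proj1 (Hd u v Hu Hv)).
  - apply continuity_2d_pt_ext_loc with (f := Fx); [|exact Hc].
    exists d. intros u v Hu Hv. symmetry. exact (is_derive_unique _ _ _ (proj1 (Hd u v Hu Hv))).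
Qed.

Lemma continuity_2d_pt_of_continuous (h : C -> R) (x y : R) :
  continuous h (x, y) -> continuity_2d_pt (fun a b => h (a, b)) x y.
Proof.
  intros H. apply continuity_2d_pt_filterlim.
  eapply filterlim_ext; [|exact H]. now intros [a b].
Qed.

Lemma continuous_of_continuity_2d_pt (H : R -> R -> R) (x y : R) :
  continuity_2d_pt H x y -> continuous (fun p : C => H (fst p) (snd p)) (x, y).
Proof. now intros Hc; apply continuity_2d_pt_filterlim in Hc. Qed.

Lemma continuity_2d_pt_comp (h : C -> R) (F G : R -> R -> R) (r t : R) :
  continuity_2d_pt F r t -> continuity_2d_pt G r t -> continuous h (F r t, G r t) ->
  continuity_2d_pt (fun a b => h (F a b, G a b)) r t.
Proof.
  rewrite !continuity_2d_pt_filterlim. intros HF HG Hh.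
  apply (filterlim_comp _ _ _ (fun z : R * R => (F (fst z) (snd z), G (fst z) (snd z))) h _
           (locally (F r t, G r t))); [|exact Hh].
  apply (continuous_comp_2 (fun z : R * R => F (fst z) (snd z)) (fun z : R * R => G (fst z) (snd z))
           (fun a b => (a, b))); [exact HF | exact HG |].
  apply (continuous_ext (fun p => p)); [now intros [p q] | now intros P HP].
Qed.

Lemma continuity_2d_pt_comp2 (h F G : R -> R -> R) (r t : R) :
  continuity_2d_pt F r t -> continuity_2d_pt G r t -> continuity_2d_pt h (F r t) (G r t) ->
  continuity_2d_pt (fun a b => h (F a b) (G a b)) r t.
Proof.
  intros HF HG Hh.
  apply (continuity_2d_pt_comp (fun p => h (fst p) (snd p)) F G); [exact HF | exact HG |].
  now apply continuity_2d_pt_filterlim in Hh.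
Qed.

Lemma continuous_slice_snd (F : R -> R -> R) (r t : R) :
  continuity_2d_pt F r t -> continuous (fun b => F r b) t.
Proof.
  intros H. apply continuity_pt_filterlim. intros eps Heps.
  destruct (H (mkposreal eps Heps)) as [d Hd]. exists d. split; [apply cond_pos|].
  intros b [_ Hb]. apply (Hd r b); [rewrite Rminus_diag, Rabs_R0; apply cond_pos | exact Hb].
Qed.

(* Continuity facts about opaque functions are taken from the context by [assumption]. *)
Ltac continuity_2d :=
  repeat match goal with
  | |- continuity_2d_pt (fun a b => _ + _) _ _ => apply continuity_2d_pt_plus
  | |- continuity_2d_pt (fun a b => _ - _) _ _ => apply continuity_2d_pt_minus
  | |- continuity_2d_pt (fun a b => _ * _) _ _ => apply continuity_2d_pt_mult
  | |- continuity_2d_pt (fun a b => - _) _ _ => apply continuity_2d_pt_opp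
  | |- continuity_2d_pt (fun a b => / _) _ _ => apply continuity_2d_pt_inv
  | |- continuity_2d_pt (fun a b => a) _ _ => apply continuity_2d_pt_id1
  | |- continuity_2d_pt (fun a b => b) _ _ => apply continuity_2d_pt_id2
  | |- continuity_2d_pt (fun a b => cos (@?F a b)) _ _ =>
      apply (continuity_1d_2d_pt_comp cos F); [apply continuity_cos|]
  | |- continuity_2d_pt (fun a b => sin (@?F a b)) _ _ =>
      apply (continuity_1d_2d_pt_comp sin F); [apply continuity_sin|]
  | |- continuity_2d_pt (fun a b => atan (@?F a b)) _ _ =>
      apply (continuity_1d_2d_pt_comp atan F); [apply continuity_pt_filterlim, continuous_atan|]
  | |- continuity_2d_pt (fun a b => ln (@?F a b)) _ _ =>
      apply (continuity_1d_2d_pt_comp ln F); [apply continuity_pt_filterlim, continuous_ln|]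
  | |- continuity_2d_pt (fun a b => ?h (@?F a b, @?G a b)) _ _ =>
      apply (continuity_2d_pt_comp h F G); [| | assumption]
  | |- continuity_2d_pt (fun a b => _) _ _ => apply continuity_2d_pt_const
  | |- continuity_2d_pt (fun a b => ?h (@?F a b) (@?G a b)) _ _ =>
      apply (continuity_2d_pt_comp2 h F G); [| | assumption]
  | |- continuity_2d_pt _ _ _ => assumption
  end.

Lemma continuity_2d_pt_mult_cos (F : R -> R -> R) (r t : R) :
  continuity_2d_pt F r t -> continuity_2d_pt (fun r t => F r t * cos t) r t.
Proof. intros; continuity_2d. Qed.

Lemma continuous_mult_cos (F : R -> R -> R) (r t : R) :
  continuity_2d_pt F r t -> continuous (fun t => F r t * cos t) t.
Proof.
  intros HF. apply (continuous_slice_snd (fun r t => F r t * cos t)), continuity_2d_pt_mult_cos, HF.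
Qed.

Lemma ex_RInt_mult_cos (F : R -> R -> R) (r a b : R) :
  (forall t, continuity_2d_pt F r t) -> ex_RInt (fun t => F r t * cos t) a b.
Proof.
  intros HF. apply (ex_RInt_continuous (V := R_CompleteNormedModule)). intros t _.
  apply continuous_mult_cos, HF.
Qed.

Lemma is_derive_RInt_param_interval (f df : R -> R -> R) (lo hi a b r0 : R) :
  a <= b -> lo < r0 < hi ->
  (forall r t, lo < r < hi -> is_derive (fun r => f r t) r (df r t)) ->
  (forall r t, lo < r < hi -> continuity_2d_pt df r t) ->
  (forall r t, lo < r < hi -> continuous (fun t => f r t) t) ->
  is_derive (fun r => RInt (fun t => f r t) a b) r0 (RInt (fun t => df r0 t) a b).
Proof.
  intros Hab Hr0 Hd Hcd Hc.
  assert (Hnear := locally_open_interval lo hi r0 Hr0).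
  rewrite (RInt_ext _ (fun t => Derive (fun u => f u t) r0))
    by (intros t _; symmetry; apply is_derive_unique, Hd, Hr0).
  apply is_derive_RInt_param.
  - eapply filter_imp; [|exact Hnear]. intros x Hx t _. eexists; now apply Hd.
  - intros t _. apply continuity_2d_pt_ext_loc with (f := df); [|now apply Hcd].
    destruct Hnear as [e He]. exists e. intros u v Hu _.
    symmetry. apply is_derive_unique, Hd, He, Hu.
  - eapply filter_imp; [|exact Hnear]. intros x Hx.
    apply (ex_RInt_continuous (V := R_CompleteNormedModule)). intros z _. now apply Hc.
Qed.

Lemma C1_on_differentiable_pt_lim (h : C -> R) (x y : R) :
  C1_on unit_disk h -> unit_disk (x, y) ->
  differentiable_pt_lim (fun a b => h (a, b)) x y (dx h (x, y)) (dy h (x, y)).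
Proof.
  intros HC Hd. destruct (HC _ Hd) as (_ & Hy & _ & Hcx & _).
  apply differentiable_pt_lim_of_partials; [| | exact Hy].
  2:{ apply (continuity_2d_pt_ext (fun a b => dx h (a, b))); [reflexivity|].
      now apply continuity_2d_pt_of_continuous. }
  destruct (unit_disk_locally_2d _ _ Hd) as [e He]. exists e. intros u v Hu Hv.
  now destruct (HC _ (He u v Hu Hv)).
Qed.

Lemma is_derive_comp_C1 (h : C -> R) (a b : R -> R) (t a' b' : R) :
  C1_on unit_disk h -> unit_disk (a t, b t) -> is_derive a t a' -> is_derive b t b' ->
  is_derive (fun s => h (a s, b s)) t (dx h (a t, b t) * a' + dy h (a t, b t) * b').
Proof.
  intros HC Hd Ha Hb. apply is_derive_Reals.
  apply (derivable_pt_lim_comp_2d (fun x y => h (x, y))); [now apply C1_on_differentiable_pt_lim | |];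
    now apply is_derive_Reals.
Qed.

Lemma C1_on_of_partials (H Hx Hy : R -> R -> R) :
  (forall x y, unit_disk (x, y) ->
     is_derive (fun x => H x y) x (Hx x y) /\ is_derive (fun y => H x y) y (Hy x y) /\
     continuity_2d_pt H x y /\ continuity_2d_pt Hx x y /\ continuity_2d_pt Hy x y) ->
  C1_on unit_disk (fun p => H (fst p) (snd p)) /\
  forall p, unit_disk p ->
    dx (fun p => H (fst p) (snd p)) p = Hx (fst p) (snd p) /\
    dy (fun p => H (fst p) (snd p)) p = Hy (fst p) (snd p).
Proof.
  intros HH.
  assert (Hd : forall p, unit_disk p ->
    dx (fun p => H (fst p) (snd p)) p = Hx (fst p) (snd p) /\
    dy (fun p => H (fst p) (snd p)) p = Hy (fst p) (snd p)).
  { intros [x y] Hp. destruct (HH x y Hp) as (D1 & D2 & _). unfold dx, dy; simpl.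
    split; now apply is_derive_unique. }
  split; [|exact Hd].
  intros [x y] Hp. destruct (HH x y Hp) as (D1 & D2 & K1 & K2 & K3).
  assert (Hnear := unit_disk_locally x y Hp).
  split; [eexists; exact D1|]. split; [eexists; exact D2|].
  split; [now apply continuous_of_continuity_2d_pt|].
  split; (eapply continuous_ext_loc;
    [eapply filter_imp; [|exact Hnear]; intros q Hq; symmetry; apply Hd, Hq
    | now apply continuous_of_continuity_2d_pt]).
Qed.

Lemma C1_on_ext (h1 h2 : C -> R) :
  (forall p, unit_disk p -> h1 p = h2 p) -> C1_on unit_disk h2 ->
  C1_on unit_disk h1 /\ forall p, unit_disk p -> dx h1 p = dx h2 p /\ dy h1 p = dy h2 p.
Proof.
  intros E HC.
  assert (Ed : forall p, unit_disk p -> dx h1 p = dx h2 p /\ dy h1 p = dy h2 p).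
  { intros [x y] Hp. destruct (unit_disk_locally_2d x y Hp) as [d Hd]. unfold dx, dy; simpl.
    split; apply Derive_ext_loc; exists d; intros t Ht; apply E, Hd;
      (exact Ht || (rewrite Rminus_diag, Rabs_R0; apply cond_pos)). }
  split; [|exact Ed].
  intros [x y] Hp. destruct (HC (x, y) Hp) as (D1 & D2 & K1 & K2 & K3). simpl in *.
  destruct (unit_disk_locally_2d x y Hp) as [d Hd].
  assert (Hnear := unit_disk_locally x y Hp).
  split; [|split; [|split; [|split]]].
  - apply ex_derive_ext_loc with (f := fun t => h2 (t, y)); [|exact D1].
    exists d. intros t Ht. symmetry.
    apply E, Hd; [exact Ht | rewrite Rminus_diag, Rabs_R0; apply cond_pos].
  - apply ex_derive_ext_loc with (f := fun t => h2 (x, t)); [|exact D2].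
    exists d. intros t Ht. symmetry.
    apply E, Hd; [rewrite Rminus_diag, Rabs_R0; apply cond_pos | exact Ht].
  - apply continuous_ext_loc with (g := h2); [|exact K1].
    eapply filter_imp; [|exact Hnear]. intros q Hq. symmetry. now apply E.
  - apply continuous_ext_loc with (g := dx h2); [|exact K2].
    eapply filter_imp; [|exact Hnear]. intros q Hq. symmetry. now apply Ed.
  - apply continuous_ext_loc with (g := dy h2); [|exact K3].
    eapply filter_imp; [|exact Hnear]. intros q Hq. symmetry. now apply Ed.
Qed.

Lemma harmonic_on_of_partials (H Hx Hy Hxx Hxy Hyx Hyy : R -> R -> R) :
  (forall x y, unit_disk (x, y) ->
     is_derive (fun x => H x y) x (Hx x y) /\ is_derive (fun y => H x y) y (Hy x y) /\
     is_derive (fun x => Hx x y) x (Hxx x y) /\ is_derive (fun y => Hx x y) y (Hxy x y) /\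
     is_derive (fun x => Hy x y) x (Hyx x y) /\ is_derive (fun y => Hy x y) y (Hyy x y) /\
     continuity_2d_pt H x y /\ continuity_2d_pt Hx x y /\ continuity_2d_pt Hy x y /\
     continuity_2d_pt Hxx x y /\ continuity_2d_pt Hxy x y /\ continuity_2d_pt Hyx x y /\
     continuity_2d_pt Hyy x y /\ Hxx x y + Hyy x y = 0) ->
  harmonic_on unit_disk (fun p => H (fst p) (snd p)) /\
  forall p, unit_disk p ->
    dx (fun p => H (fst p) (snd p)) p = Hx (fst p) (snd p) /\
    dy (fun p => H (fst p) (snd p)) p = Hy (fst p) (snd p).
Proof.
  intros HH.
  destruct (C1_on_of_partials H Hx Hy) as [C0 E0].
  { intros x y Hd. destruct (HH x y Hd) as (? & ? & _ & _ & _ & _ & ? & ? & ? & _). auto. }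
  destruct (C1_on_of_partials Hx Hxx Hxy) as [Cx Ex].
  { intros x y Hd. destruct (HH x y Hd) as (_ & _ & ? & ? & _ & _ & _ & ? & _ & ? & ? & _). auto. }
  destruct (C1_on_of_partials Hy Hyx Hyy) as [Cy Ey].
  { intros x y Hd.
    destruct (HH x y Hd) as (_ & _ & _ & _ & ? & ? & _ & _ & ? & _ & _ & ? & ? & _). auto. }
  destruct (C1_on_ext (dx (fun p => H (fst p) (snd p))) (fun p => Hx (fst p) (snd p))) as [Cx' Ex'];
    [intros p Hp; now apply E0 | exact Cx |].
  destruct (C1_on_ext (dy (fun p => H (fst p) (snd p))) (fun p => Hy (fst p) (snd p))) as [Cy' Ey'];
    [intros p Hp; now apply E0 | exact Cy |].
  split; [|exact E0]. split; [split; [exact C0 | split; assumption]|].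
  intros [x y] Hp.
  rewrite (proj1 (Ex' _ Hp)), (proj2 (Ey' _ Hp)), (proj1 (Ex _ Hp)), (proj2 (Ey _ Hp)).
  destruct (HH x y Hp) as (_ & _ & _ & _ & _ & _ & _ & _ & _ & _ & _ & _ & _ & L). exact L.
Qed.

(** * Holomorphic maps in polar coordinates *)

(* [F1 + i F2] is complex differentiable at [X + i Y] with derivative [G1 + i G2]. *)
Definition has_complex_derivative (F1 F2 G1 G2 : R -> R -> R) (X Y : R) : Prop :=
  differentiable_pt_lim F1 X Y (G1 X Y) (- G2 X Y) /\ differentiable_pt_lim F2 X Y (G2 X Y) (G1 X Y).

Definition cauchy_riemann_partials (F1 F2 G1 G2 : R -> R -> R) (x y : R) : Prop :=
  is_derive (fun x => F1 x y) x (G1 x y) /\ is_derive (fun y => F1 x y) y (- G2 x y) /\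
  is_derive (fun x => F2 x y) x (G2 x y) /\ is_derive (fun y => F2 x y) y (G1 x y).

Lemma has_complex_derivative_of_partials (F1 F2 G1 G2 : R -> R -> R) (X Y : R) :
  locally_2d (cauchy_riemann_partials F1 F2 G1 G2) X Y ->
  continuity_2d_pt G1 X Y -> continuity_2d_pt G2 X Y -> has_complex_derivative F1 F2 G1 G2 X Y.
Proof.
  intros HCR HG1 HG2. split.
  - apply (differentiable_pt_lim_of_is_derive F1 G1 (fun x y => - G2 x y)); [|exact HG1].
    eapply locally_2d_impl; [|exact HCR]. apply locally_2d_forall. intros x y (? & ? & _ & _). now split.
  - apply (differentiable_pt_lim_of_is_derive F2 G2 G1); [|exact HG2].
    eapply locally_2d_impl; [|exact HCR]. apply locally_2d_forall. intros x y (_ & _ & ? & ?). now split.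
Qed.

Definition rot_cos (c s t : R) : R := c * cos t - s * sin t.
Definition rot_sin (c s t : R) : R := s * cos t + c * sin t.

Lemma rot_cos_sin_sqr (c s t : R) : c * c + s * s = 1 ->
  rot_cos c s t * rot_cos c s t + rot_sin c s t * rot_sin c s t = 1.
Proof.
  intros H. unfold rot_cos, rot_sin. pose proof (sin2_cos2 t) as E. unfold Rsqr in E.
  transitivity ((c * c + s * s) * (sin t * sin t + cos t * cos t)); [ring|]. rewrite H, E. ring.
Qed.

Lemma polar_sqr_lt_1 (c s r t : R) : c * c + s * s = 1 -> -1 < r < 1 ->
  (r * rot_cos c s t) * (r * rot_cos c s t) + (r * rot_sin c s t) * (r * rot_sin c s t) < 1.
Proof.
  intros Hcs Hr. pose proof (rot_cos_sin_sqr c s t Hcs).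
  replace ((r * rot_cos c s t) * (r * rot_cos c s t) + (r * rot_sin c s t) * (r * rot_sin c s t))
    with (r * r * (rot_cos c s t * rot_cos c s t + rot_sin c s t * rot_sin c s t)) by ring. nra.
Qed.

Lemma is_derive_rot_cos (c s t : R) : is_derive (rot_cos c s) t (- rot_sin c s t).
Proof. unfold rot_cos, rot_sin. auto_derive; [easy | ring]. Qed.

Lemma is_derive_rot_sin (c s t : R) : is_derive (rot_sin c s) t (rot_cos c s t).
Proof. unfold rot_cos, rot_sin. auto_derive; [easy | ring]. Qed.

Section PolarDerivatives.

Variables (F1 F2 G1 G2 : R -> R -> R) (c s r t : R).
Let X := r * rot_cos c s t.
Let Y := r * rot_sin c s t.
Hypothesis HF : has_complex_derivative F1 F2 G1 G2 X Y.

Lemma is_derive_polar_r :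
  is_derive (fun r => F1 (r * rot_cos c s t) (r * rot_sin c s t)) r
    (G1 X Y * rot_cos c s t - G2 X Y * rot_sin c s t) /\
  is_derive (fun r => F2 (r * rot_cos c s t) (r * rot_sin c s t)) r
    (G2 X Y * rot_cos c s t + G1 X Y * rot_sin c s t).
Proof.
  destruct HF as [H1 H2].
  assert (Ha : is_derive (fun r => r * rot_cos c s t) r (rot_cos c s t)).
  { auto_derive; [easy | ring]. }
  assert (Hb : is_derive (fun r => r * rot_sin c s t) r (rot_sin c s t)).
  { auto_derive; [easy | ring]. }
  apply is_derive_Reals in Ha, Hb.
  pose proof (derivable_pt_lim_comp_2d F1 (fun r => r * rot_cos c s t) (fun r => r * rot_sin c s t)
                r _ _ _ _ H1 Ha Hb) as D1.
  pose proof (derivable_pt_lim_comp_2d F2 (fun r => r * rot_cos c s t) (fun r => r * rot_sin c s t)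
                r _ _ _ _ H2 Ha Hb) as D2.
  apply is_derive_Reals in D1, D2. split; (eapply is_derive_eq; [eassumption | ring]).
Qed.

Lemma is_derive_polar_t :
  is_derive (fun t => F1 (r * rot_cos c s t) (r * rot_sin c s t)) t
    (- r * (G2 X Y * rot_cos c s t + G1 X Y * rot_sin c s t)) /\
  is_derive (fun t => F2 (r * rot_cos c s t) (r * rot_sin c s t)) t
    (r * (G1 X Y * rot_cos c s t - G2 X Y * rot_sin c s t)).
Proof.
  destruct HF as [H1 H2].
  assert (Ha : derivable_pt_lim (fun t => r * rot_cos c s t) t (- r * rot_sin c s t)).
  { apply is_derive_Reals. unfold rot_cos, rot_sin. auto_derive; [easy | ring]. }
  assert (Hb : derivable_pt_lim (fun t => r * rot_sin c s t) t (r * rot_cos c s t)).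
  { apply is_derive_Reals. unfold rot_cos, rot_sin. auto_derive; [easy | ring]. }
  pose proof (derivable_pt_lim_comp_2d F1 (fun t => r * rot_cos c s t) (fun t => r * rot_sin c s t)
                t _ _ _ _ H1 Ha Hb) as D1.
  pose proof (derivable_pt_lim_comp_2d F2 (fun t => r * rot_cos c s t) (fun t => r * rot_sin c s t)
                t _ _ _ _ H2 Ha Hb) as D2.
  apply is_derive_Reals in D1, D2. split; (eapply is_derive_eq; [eassumption | ring]).
Qed.

End PolarDerivatives.

(** * The gradient estimate for bounded harmonic functions *)

(* [(P, A, B)] stands for [(phi (r e^it), e^it phi' (r e^it), e^2it phi'' (r e^it))], in real
   coordinates, for a holomorphic self-map [phi] of the disk. *)
Record polar_chart (P1 P2 A1 A2 B1 B2 : R -> R -> R) : Prop := {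
  chart_in_disk : forall r t, -1 < r < 1 -> unit_disk (P1 r t, P2 r t);
  chart_dr : forall r t, -1 < r < 1 ->
    is_derive (fun r => P1 r t) r (A1 r t) /\ is_derive (fun r => P2 r t) r (A2 r t) /\
    is_derive (fun r => A1 r t) r (B1 r t) /\ is_derive (fun r => A2 r t) r (B2 r t);
  chart_dt : forall r t, -1 < r < 1 ->
    is_derive (fun t => P1 r t) t (- r * A2 r t) /\ is_derive (fun t => P2 r t) t (r * A1 r t) /\
    is_derive (fun t => - r * A2 r t) t (- (r * r * B1 r t + r * A1 r t)) /\
    is_derive (fun t => r * A1 r t) t (- (r * r * B2 r t + r * A2 r t));
  chart_continuous : forall r t, -1 < r < 1 ->
    continuity_2d_pt P1 r t /\ continuity_2d_pt P2 r t /\ continuity_2d_pt A1 r t /\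
    continuity_2d_pt A2 r t /\ continuity_2d_pt B1 r t /\ continuity_2d_pt B2 r t;
  chart_periodic : forall r, -1 < r < 1 ->
    P1 r (2 * PI) = P1 r 0 /\ P2 r (2 * PI) = P2 r 0 /\
    A1 r (2 * PI) = A1 r 0 /\ A2 r (2 * PI) = A2 r 0
}.

Section HarmonicAlongChart.

Variables (u : C -> R) (P1 P2 A1 A2 B1 B2 : R -> R -> R).
Hypothesis u_harmonic : harmonic_on unit_disk u.
Hypothesis u_bounded : forall z, unit_disk z -> Rabs (u z) <= 1.
Hypothesis chart : polar_chart P1 P2 A1 A2 B1 B2.

Let ux r t := dx u (P1 r t, P2 r t).
Let uy r t := dy u (P1 r t, P2 r t).
Let U r t := u (P1 r t, P2 r t).
Let Ur r t := ux r t * A1 r t + uy r t * A2 r t.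
Let Ut r t := ux r t * (- r * A2 r t) + uy r t * (r * A1 r t).
Let Urr r t :=
  (dx (dx u) (P1 r t, P2 r t) * A1 r t + dy (dx u) (P1 r t, P2 r t) * A2 r t) * A1 r t
  + ux r t * B1 r t
  + (dx (dy u) (P1 r t, P2 r t) * A1 r t + dy (dy u) (P1 r t, P2 r t) * A2 r t) * A2 r t
  + uy r t * B2 r t.
Let Utt r t :=
  (dx (dx u) (P1 r t, P2 r t) * (- r * A2 r t) + dy (dx u) (P1 r t, P2 r t) * (r * A1 r t))
    * (- r * A2 r t)
  + ux r t * (- (r * r * B1 r t + r * A1 r t))
  + (dx (dy u) (P1 r t, P2 r t) * (- r * A2 r t) + dy (dy u) (P1 r t, P2 r t) * (r * A1 r t))
    * (r * A1 r t)
  + uy r t * (- (r * r * B2 r t + r * A2 r t)).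

Let u_C1 : C1_on unit_disk u := proj1 (proj1 u_harmonic).
Let ux_C1 : C1_on unit_disk (dx u) := proj1 (proj2 (proj1 u_harmonic)).
Let uy_C1 : C1_on unit_disk (dy u) := proj2 (proj2 (proj1 u_harmonic)).

Lemma is_derive_U_r r t : -1 < r < 1 -> is_derive (fun r => U r t) r (Ur r t).
Proof.
  intros Hr. destruct (chart_dr _ _ _ _ _ _ chart r t Hr) as (HP1 & HP2 & _).
  now apply (is_derive_comp_C1 u (fun r => P1 r t) (fun r => P2 r t)); [|apply chart|..].
Qed.

Lemma is_derive_U_t r t : -1 < r < 1 -> is_derive (fun t => U r t) t (Ut r t).
Proof.
  intros Hr. destruct (chart_dt _ _ _ _ _ _ chart r t Hr) as (HP1 & HP2 & _).
  now apply (is_derive_comp_C1 u (fun t => P1 r t) (fun t => P2 r t)); [|apply chart|..].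
Qed.

Lemma is_derive_Ur_r r t : -1 < r < 1 -> is_derive (fun r => Ur r t) r (Urr r t).
Proof.
  intros Hr. destruct (chart_dr _ _ _ _ _ _ chart r t Hr) as (HP1 & HP2 & HA1 & HA2).
  pose proof (chart_in_disk _ _ _ _ _ _ chart r t Hr).
  unfold Ur, ux, uy. eapply is_derive_eq.
  - apply is_derive_Rplus; apply is_derive_Rmult; try eassumption.
    + apply (is_derive_comp_C1 (dx u) (fun r => P1 r t) (fun r => P2 r t)); eassumption.
    + apply (is_derive_comp_C1 (dy u) (fun r => P1 r t) (fun r => P2 r t)); eassumption.
  - unfold Urr, ux, uy. ring.
Qed.

Lemma is_derive_Ut_t r t : -1 < r < 1 -> is_derive (fun t => Ut r t) t (Utt r t).
Proof.
  intros Hr. destruct (chart_dt _ _ _ _ _ _ chart r t Hr) as (HP1 & HP2 & HA1 & HA2).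
  pose proof (chart_in_disk _ _ _ _ _ _ chart r t Hr).
  unfold Ut, ux, uy. eapply is_derive_eq.
  - apply is_derive_Rplus; apply is_derive_Rmult; try eassumption.
    + apply (is_derive_comp_C1 (dx u) (fun t => P1 r t) (fun t => P2 r t)); eassumption.
    + apply (is_derive_comp_C1 (dy u) (fun t => P1 r t) (fun t => P2 r t)); eassumption.
  - unfold Utt, ux, uy. ring.
Qed.

(* The polar form of the Laplacian of [u o phi], which equals [|phi'|^2 (Delta u) o phi]. *)
Lemma polar_laplacian_U r t : -1 < r < 1 -> r * r * Urr r t + r * Ur r t + Utt r t = 0.
Proof.
  intros Hr. pose proof (proj2 u_harmonic _ (chart_in_disk _ _ _ _ _ _ chart r t Hr)) as Hlap.
  unfold Urr, Ur, Utt, ux, uy.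
  replace (dy (dy u) (P1 r t, P2 r t)) with (- dx (dx u) (P1 r t, P2 r t)) by lra. ring.
Qed.

Lemma continuity_2d_pt_U r t : -1 < r < 1 ->
  continuity_2d_pt U r t /\ continuity_2d_pt Ur r t /\
  continuity_2d_pt Urr r t /\ continuity_2d_pt Utt r t.
Proof.
  intros Hr. pose proof (chart_in_disk _ _ _ _ _ _ chart r t Hr) as Hin.
  destruct (chart_continuous _ _ _ _ _ _ chart r t Hr) as (? & ? & ? & ? & ? & ?).
  destruct (u_C1 _ Hin) as (_ & _ & ? & ? & ?).
  destruct (ux_C1 _ Hin) as (_ & _ & _ & ? & ?).
  destruct (uy_C1 _ Hin) as (_ & _ & _ & ? & ?).
  unfold U, Ur, Urr, Utt, ux, uy. repeat split; continuity_2d.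
Qed.

Let mom r : R := RInt (fun t => U r t * cos t) 0 (2 * PI).
Let dmom r : R := RInt (fun t => Ur r t * cos t) 0 (2 * PI).

Lemma is_derive_mom r : -1 < r < 1 -> is_derive mom r (dmom r).
Proof.
  intros Hr. pose proof PI_RGT_0. unfold mom, dmom.
  apply (is_derive_RInt_param_interval (fun r t => U r t * cos t) (fun r t => Ur r t * cos t) (-1) 1);
    [lra | exact Hr | | |]; intros r' t Hr'.
  - now apply is_derive_mult_const_r, is_derive_U_r.
  - now apply continuity_2d_pt_mult_cos, continuity_2d_pt_U.
  - now apply continuous_mult_cos, continuity_2d_pt_U.
Qed.

Let Q r : R := RInt (fun t => (r * r * Ur r t - r * U r t) * cos t) 0 (2 * PI).

Lemma Q_eq r : -1 < r < 1 -> Q r = r * r * dmom r - r * mom r.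
Proof.
  intros Hr. unfold Q, mom, dmom. rewrite <- RInt_lin_comb.
  - apply RInt_ext. intros t _. real_eq. ring.
  - apply ex_RInt_mult_cos. intros t. now apply continuity_2d_pt_U.
  - apply ex_RInt_mult_cos. intros t. now apply continuity_2d_pt_U.
Qed.

(* By the polar Laplacian the integrand is [- d/dt (Ut cos + U sin)], and [U] is periodic. *)
Lemma RInt_Q_derivative_integrand r : -1 < r < 1 ->
  RInt (fun t => (r * r * Urr r t + r * Ur r t - U r t) * cos t) 0 (2 * PI) = 0.
Proof.
  intros Hr. pose proof PI_RGT_0.
  rewrite (RInt_antiderivative (fun t => - (Ut r t * cos t + U r t * sin t))); [| lra | |].
  - destruct (chart_periodic _ _ _ _ _ _ chart r Hr) as (E1 & E2 & E3 & E4).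
    unfold Ut, U, ux, uy. rewrite E1, E2, E3, E4, cos_2PI, sin_2PI, cos_0, sin_0. real_eq. ring.
  - intros t _. eapply is_derive_eq.
    + apply is_derive_Ropp, is_derive_Rplus; apply is_derive_Rmult;
        [now apply is_derive_Ut_t | apply is_derive_Reals, derivable_pt_lim_cos
        | now apply is_derive_U_t | apply is_derive_Reals, derivable_pt_lim_sin].
    + pose proof (polar_laplacian_U r t Hr) as Hlap.
      replace (Utt r t) with (- (r * r * Urr r t + r * Ur r t)) by lra. ring.
  - intros t _. destruct (continuity_2d_pt_U r t Hr) as (? & ? & ? & _).
    apply (continuous_mult_cos (fun r t => r * r * Urr r t + r * Ur r t - U r t)). continuity_2d.
Qed.

Lemma is_derive_Q r : -1 < r < 1 -> is_derive Q r 0.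
Proof.
  intros Hr. pose proof PI_RGT_0. rewrite <- (RInt_Q_derivative_integrand r Hr). unfold Q.
  apply (is_derive_RInt_param_interval (fun r t => (r * r * Ur r t - r * U r t) * cos t)
           (fun r t => (r * r * Urr r t + r * Ur r t - U r t) * cos t) (-1) 1); [lra | exact Hr | | |];
    intros r' t Hr'.
  - apply is_derive_mult_const_r. eapply is_derive_eq.
    + apply is_derive_Rminus; apply is_derive_Rmult;
        [apply is_derive_Rmult; apply is_derive_Reals, derivable_pt_lim_id | now apply is_derive_Ur_r
        | apply is_derive_Reals, derivable_pt_lim_id | now apply is_derive_U_r].
    + cbv beta. ring.
  - destruct (continuity_2d_pt_U r' t Hr') as (? & ? & ? & _).
    apply continuity_2d_pt_mult_cos. continuity_2d.
  - destruct (continuity_2d_pt_U r' t Hr') as (? & ? & _).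
    apply (continuous_mult_cos (fun r t => r * r * Ur r t - r * U r t)). continuity_2d.
Qed.

Lemma mom_euler r : -1 < r < 1 -> r * r * dmom r - r * mom r = 0.
Proof.
  intros Hr. rewrite <- Q_eq by exact Hr.
  rewrite (eq_of_is_derive_0 Q (-1) 1 is_derive_Q r 0 Hr) by lra.
  rewrite Q_eq by lra. ring.
Qed.

(* Dividing [mom_euler] by [r^3] shows that [mom r / r] is constant on [(0, 1)]. *)
Lemma mom_linear r : 0 < r < 1 -> mom 0 = 0 -> mom r = dmom 0 * r.
Proof.
  intros Hr H0.
  assert (Hk : forall x y, 0 < x < 1 -> 0 < y < 1 -> mom x / x = mom y / y).
  { apply (eq_of_is_derive_0 (fun x => mom x / x) 0 1). intros x Hx.
    eapply is_derive_eq.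
    - apply (is_derive_div mom (fun x => x));
        [apply is_derive_mom; lra | apply is_derive_Reals, derivable_pt_lim_id | lra].
    - pose proof (mom_euler x ltac:(lra)) as He. cbv beta.
      replace (dmom x * x - mom x * 1) with ((x * x * dmom x - x * mom x) / x) by (field; lra).
      rewrite He. unfold Rdiv. ring. }
  rewrite (is_derive_0_of_linear_right mom (dmom 0) (mom r / r));
    [field; lra | apply is_derive_mom; lra | exact H0 |].
  intros r' Hr'. rewrite <- (Hk r' r) by assumption. field. lra.
Qed.

Lemma mom_bound r : -1 < r < 1 -> Rabs (mom r) <= 4.
Proof.
  intros Hr. pose proof PI_RGT_0. unfold mom. rewrite <- RInt_abs_cos.
  pose proof (fun t => continuous_mult_cos U r t (proj1 (continuity_2d_pt_U r t Hr))) as Hc.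
  eapply Rle_trans;
    [apply abs_RInt_le; [lra | apply ex_RInt_mult_cos; intros; now apply continuity_2d_pt_U]|].
  apply RInt_le; [lra | | |].
  - apply (ex_RInt_continuous (V := R_CompleteNormedModule)). intros t _.
    apply (continuous_comp (fun t => U r t * cos t) Rabs); [apply Hc | apply continuous_Rabs].
  - apply (ex_RInt_continuous (V := R_CompleteNormedModule)). intros t _.
    apply (continuous_comp cos Rabs); [apply continuous_cos | apply continuous_Rabs].
  - intros t _. rewrite Rabs_mult. pose proof (Rabs_pos (cos t)).
    pose proof (u_bounded _ (chart_in_disk _ _ _ _ _ _ chart r t Hr)). unfold U. nra.
Qed.

Variables (w1 w2 m c s : R).
Hypothesis chart_center : forall t,
  P1 0 t = w1 /\ P2 0 t = w2 /\
  A1 0 t = m * (c * cos t - s * sin t) /\ A2 0 t = m * (s * cos t + c * sin t).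

Lemma mom_at_0 : mom 0 = 0.
Proof.
  pose proof PI_RGT_0. unfold mom.
  rewrite (RInt_antiderivative (fun t => u (w1, w2) * sin t)); [| lra | |].
  - rewrite sin_2PI, sin_0. ring.
  - intros t _. unfold U. destruct (chart_center t) as (-> & -> & _).
    now apply is_derive_scal, is_derive_Reals, derivable_pt_lim_sin.
  - intros t _. apply continuous_mult_cos, continuity_2d_pt_U. lra.
Qed.

Lemma dmom_at_0 : dmom 0 = PI * m * (dx u (w1, w2) * c + dy u (w1, w2) * s).
Proof.
  pose proof PI_RGT_0. unfold dmom.
  set (gx := dx u (w1, w2)). set (gy := dy u (w1, w2)).
  rewrite (RInt_antiderivative (fun t => m * (gx * c + gy * s) * (t / 2 + sin (2 * t) / 4)
                                        + m * (gy * c - gx * s) * (sin t * sin t / 2))); [| lra | |].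
  - rewrite sin_2a, sin_2PI, cos_2PI, !Rmult_0_r, sin_0. field.
  - intros t _. unfold Ur, ux, uy. destruct (chart_center t) as (-> & -> & -> & ->).
    fold gx gy. eapply is_derive_eq; [auto_derive; auto|].
    rewrite cos_2a_cos. field.
  - intros t _. apply continuous_mult_cos, continuity_2d_pt_U. lra.
Qed.

Lemma chart_gradient_bound : PI * m * (dx u (w1, w2) * c + dy u (w1, w2) * s) <= 4.
Proof.
  rewrite <- dmom_at_0. apply le_of_linear_bound; [lra|].
  intros r Hr. rewrite <- (mom_linear r Hr mom_at_0).
  pose proof (mom_bound r ltac:(lra)) as Hb. apply Rabs_le_between in Hb. lra.
Qed.

End HarmonicAlongChart.

Section Mobius.

Variables (w1 w2 : R).

(* [mob1 + i mob2] is the disk automorphism [(z + w) / D] with [D = 1 + conj w z], at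
   [z = X + i Y] and [w = w1 + i w2]; [dmob] and [d2mob] are its complex derivatives
   [(1 - |w|^2) / D^2] and [-2 (1 - |w|^2) conj w / D^3], written with [conj D] on top. *)
Definition mob_den1 (X Y : R) : R := 1 + w1 * X + w2 * Y.
Definition mob_den2 (X Y : R) : R := w1 * Y - w2 * X.
Definition mob_den_norm2 (X Y : R) : R := mob_den1 X Y * mob_den1 X Y + mob_den2 X Y * mob_den2 X Y.
Definition mob1 (X Y : R) : R :=
  ((X + w1) * mob_den1 X Y + (Y + w2) * mob_den2 X Y) / mob_den_norm2 X Y.
Definition mob2 (X Y : R) : R :=
  ((Y + w2) * mob_den1 X Y - (X + w1) * mob_den2 X Y) / mob_den_norm2 X Y.
Definition dmob1 (X Y : R) : R :=
  (1 - w1 * w1 - w2 * w2) * (mob_den1 X Y * mob_den1 X Y - mob_den2 X Y * mob_den2 X Y)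
  / (mob_den_norm2 X Y * mob_den_norm2 X Y).
Definition dmob2 (X Y : R) : R :=
  - (2 * (1 - w1 * w1 - w2 * w2) * mob_den1 X Y * mob_den2 X Y)
  / (mob_den_norm2 X Y * mob_den_norm2 X Y).
Definition mob_den_cube1 (X Y : R) : R :=
  mob_den1 X Y * mob_den1 X Y * mob_den1 X Y - 3 * mob_den1 X Y * mob_den2 X Y * mob_den2 X Y.
Definition mob_den_cube2 (X Y : R) : R :=
  mob_den2 X Y * mob_den2 X Y * mob_den2 X Y - 3 * mob_den1 X Y * mob_den1 X Y * mob_den2 X Y.
Definition d2mob1 (X Y : R) : R :=
  -2 * (1 - w1 * w1 - w2 * w2) * (w1 * mob_den_cube1 X Y + w2 * mob_den_cube2 X Y)
  / (mob_den_norm2 X Y * mob_den_norm2 X Y * mob_den_norm2 X Y).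
Definition d2mob2 (X Y : R) : R :=
  -2 * (1 - w1 * w1 - w2 * w2) * (w1 * mob_den_cube2 X Y - w2 * mob_den_cube1 X Y)
  / (mob_den_norm2 X Y * mob_den_norm2 X Y * mob_den_norm2 X Y).

Lemma mob_den_norm2_eq (X Y : R) :
  mob_den_norm2 X Y
  = (X + w1) * (X + w1) + (Y + w2) * (Y + w2) + (1 - w1 * w1 - w2 * w2) * (1 - X * X - Y * Y).
Proof. unfold mob_den_norm2, mob_den1, mob_den2. ring. Qed.

Hypothesis w_in_disk : w1 * w1 + w2 * w2 < 1.

Lemma mob_den_norm2_pos (X Y : R) : X * X + Y * Y < 1 -> 0 < mob_den_norm2 X Y.
Proof.
  intros HX. rewrite mob_den_norm2_eq.
  assert (0 < (1 - w1 * w1 - w2 * w2) * (1 - X * X - Y * Y)) by (apply Rmult_lt_0_compat; lra).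
  pose proof (Rle_0_sqr (X + w1)). pose proof (Rle_0_sqr (Y + w2)). unfold Rsqr in *. lra.
Qed.

Lemma mob_in_disk (X Y : R) : X * X + Y * Y < 1 -> unit_disk (mob1 X Y, mob2 X Y).
Proof.
  intros HX. pose proof (mob_den_norm2_pos X Y HX) as HQ. apply unit_disk_iff.
  replace (mob1 X Y * mob1 X Y + mob2 X Y * mob2 X Y)
    with (((X + w1) * (X + w1) + (Y + w2) * (Y + w2)) / mob_den_norm2 X Y)
    by (unfold mob1, mob2; unfold mob_den_norm2 in *; field; lra).
  apply Rmult_lt_reg_r with (mob_den_norm2 X Y); [exact HQ|].
  unfold Rdiv. rewrite Rmult_assoc, Rinv_l, mob_den_norm2_eq by lra.
  assert (0 < (1 - w1 * w1 - w2 * w2) * (1 - X * X - Y * Y)) by (apply Rmult_lt_0_compat; lra). lra.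
Qed.

Lemma mob_cauchy_riemann (X Y : R) : mob_den_norm2 X Y <> 0 ->
  cauchy_riemann_partials mob1 mob2 dmob1 dmob2 X Y /\
  cauchy_riemann_partials dmob1 dmob2 d2mob1 d2mob2 X Y.
Proof.
  unfold cauchy_riemann_partials, mob1, mob2, dmob1, dmob2, d2mob1, d2mob2,
    mob_den_cube1, mob_den_cube2, mob_den_norm2, mob_den1, mob_den2.
  intros HQ. split; (split; [|split; [|split]]); auto_derive;
    solve [repeat split; repeat apply Rmult_integral_contrapositive_currified; assumption
          | real_eq; field; assumption].
Qed.

Lemma mob_continuity (X Y : R) : mob_den_norm2 X Y <> 0 ->
  continuity_2d_pt mob1 X Y /\ continuity_2d_pt mob2 X Y /\ continuity_2d_pt dmob1 X Y /\
  continuity_2d_pt dmob2 X Y /\ continuity_2d_pt d2mob1 X Y /\ continuity_2d_pt d2mob2 X Y.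
Proof.
  intros HQ.
  assert (mob_den_norm2 X Y * mob_den_norm2 X Y <> 0) by now apply Rmult_integral_contrapositive.
  assert (mob_den_norm2 X Y * mob_den_norm2 X Y * mob_den_norm2 X Y <> 0)
    by now repeat apply Rmult_integral_contrapositive.
  assert (continuity_2d_pt mob_den1 X Y) by (unfold mob_den1; continuity_2d).
  assert (continuity_2d_pt mob_den2 X Y) by (unfold mob_den2; continuity_2d).
  assert (continuity_2d_pt mob_den_norm2 X Y) by (unfold mob_den_norm2; continuity_2d).
  unfold mob1, mob2, dmob1, dmob2, d2mob1, d2mob2, mob_den_cube1, mob_den_cube2, Rdiv.
  repeat split; continuity_2d; assumption.
Qed.

Lemma mob_has_complex_derivative (X Y : R) : mob_den_norm2 X Y <> 0 ->
  has_complex_derivative mob1 mob2 dmob1 dmob2 X Y /\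
  has_complex_derivative dmob1 dmob2 d2mob1 d2mob2 X Y.
Proof.
  intros HQ. destruct (mob_continuity X Y HQ) as (_ & _ & ? & ? & ? & ?).
  assert (Hnear : locally_2d (fun x y => mob_den_norm2 x y <> 0) X Y).
  { apply continuity_2d_pt_neq_0; [|exact HQ].
    unfold mob_den_norm2, mob_den1, mob_den2. continuity_2d. }
  split; apply has_complex_derivative_of_partials; try assumption;
    (eapply locally_2d_impl; [|exact Hnear]); apply locally_2d_forall; intros x y Hxy;
    apply (mob_cauchy_riemann x y Hxy).
Qed.

End Mobius.

Section MobiusChart.

Variables (w1 w2 c s : R).

Definition mob_chart_P1 (r t : R) : R := mob1 w1 w2 (r * rot_cos c s t) (r * rot_sin c s t).
Definition mob_chart_P2 (r t : R) : R := mob2 w1 w2 (r * rot_cos c s t) (r * rot_sin c s t).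
Definition mob_chart_A1 (r t : R) : R :=
  dmob1 w1 w2 (r * rot_cos c s t) (r * rot_sin c s t) * rot_cos c s t
  - dmob2 w1 w2 (r * rot_cos c s t) (r * rot_sin c s t) * rot_sin c s t.
Definition mob_chart_A2 (r t : R) : R :=
  dmob2 w1 w2 (r * rot_cos c s t) (r * rot_sin c s t) * rot_cos c s t
  + dmob1 w1 w2 (r * rot_cos c s t) (r * rot_sin c s t) * rot_sin c s t.
Definition mob_chart_B1 (r t : R) : R :=
  d2mob1 w1 w2 (r * rot_cos c s t) (r * rot_sin c s t)
    * (rot_cos c s t * rot_cos c s t - rot_sin c s t * rot_sin c s t)
  - d2mob2 w1 w2 (r * rot_cos c s t) (r * rot_sin c s t) * (2 * rot_cos c s t * rot_sin c s t).
Definition mob_chart_B2 (r t : R) : R :=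
  d2mob2 w1 w2 (r * rot_cos c s t) (r * rot_sin c s t)
    * (rot_cos c s t * rot_cos c s t - rot_sin c s t * rot_sin c s t)
  + d2mob1 w1 w2 (r * rot_cos c s t) (r * rot_sin c s t) * (2 * rot_cos c s t * rot_sin c s t).

Hypothesis w_in_disk : w1 * w1 + w2 * w2 < 1.
Hypothesis cs_unit : c * c + s * s = 1.

Lemma mob_polar_chart :
  polar_chart mob_chart_P1 mob_chart_P2 mob_chart_A1 mob_chart_A2 mob_chart_B1 mob_chart_B2.
Proof.
  assert (HQ : forall r t, -1 < r < 1 ->
                 mob_den_norm2 w1 w2 (r * rot_cos c s t) (r * rot_sin c s t) <> 0).
  { intros r t Hr. apply Rgt_not_eq, mob_den_norm2_pos, polar_sqr_lt_1; assumption. }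
  split.
  - intros r t Hr. now apply mob_in_disk, polar_sqr_lt_1.
  - intros r t Hr. destruct (mob_has_complex_derivative w1 w2 _ _ (HQ r t Hr)) as [H1 H2].
    destruct (is_derive_polar_r _ _ _ _ c s r t H1) as [HP1 HP2].
    destruct (is_derive_polar_r _ _ _ _ c s r t H2) as [HA1 HA2].
    unfold mob_chart_P1, mob_chart_P2, mob_chart_A1, mob_chart_A2, mob_chart_B1, mob_chart_B2.
    split; [exact HP1 | split; [exact HP2 | split]].
    + eapply is_derive_eq;
        [apply is_derive_Rminus; apply is_derive_mult_const_r; [exact HA1 | exact HA2] | ring].
    + eapply is_derive_eq;
        [apply is_derive_Rplus; apply is_derive_mult_const_r; [exact HA2 | exact HA1] | ring].
  - intros r t Hr. destruct (mob_has_complex_derivative w1 w2 _ _ (HQ r t Hr)) as [H1 H2].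
    destruct (is_derive_polar_t _ _ _ _ c s r t H1) as [HP1 HP2].
    destruct (is_derive_polar_t _ _ _ _ c s r t H2) as [HA1 HA2].
    unfold mob_chart_P1, mob_chart_P2, mob_chart_A1, mob_chart_A2, mob_chart_B1, mob_chart_B2.
    split; [exact HP1 | split; [exact HP2 | split]].
    + eapply is_derive_eq.
      * apply is_derive_scal, is_derive_Rplus; apply is_derive_Rmult;
          [exact HA2 | apply is_derive_rot_cos | exact HA1 | apply is_derive_rot_sin].
      * cbv beta. ring.
    + eapply is_derive_eq.
      * apply is_derive_scal, is_derive_Rminus; apply is_derive_Rmult;
          [exact HA1 | apply is_derive_rot_cos | exact HA2 | apply is_derive_rot_sin].
      * cbv beta. ring.
  - intros r t Hr. pose proof (HQ r t Hr) as HQrt.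
    destruct (mob_continuity w1 w2 _ _ HQrt) as (? & ? & ? & ? & ? & ?).
    unfold mob_chart_P1, mob_chart_P2, mob_chart_A1, mob_chart_A2, mob_chart_B1, mob_chart_B2,
      rot_cos, rot_sin.
    repeat split; continuity_2d.
  - intros r Hr. unfold mob_chart_P1, mob_chart_P2, mob_chart_A1, mob_chart_A2, rot_cos, rot_sin.
    now rewrite cos_2PI, sin_2PI, cos_0, sin_0.
Qed.

Lemma mob_chart_center (t : R) :
  mob_chart_P1 0 t = w1 /\ mob_chart_P2 0 t = w2 /\
  mob_chart_A1 0 t = (1 - w1 * w1 - w2 * w2) * (c * cos t - s * sin t) /\
  mob_chart_A2 0 t = (1 - w1 * w1 - w2 * w2) * (s * cos t + c * sin t).
Proof.
  unfold mob_chart_P1, mob_chart_P2, mob_chart_A1, mob_chart_A2, rot_cos, rot_sin.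
  rewrite !Rmult_0_l.
  unfold mob1, mob2, dmob1, dmob2, mob_den_norm2, mob_den1, mob_den2.
  repeat split; field_simplify; ring.
Qed.

End MobiusChart.

Lemma harmonic_gradient_bound (u : C -> R) (w : C) :
  harmonic_on unit_disk u -> (forall z, unit_disk z -> Rabs (u z) <= 1) -> unit_disk w ->
  PI * (1 - Cmod w * Cmod w) * Cmod (dx u w, dy u w) <= 4.
Proof.
  intros Hu Hb Hw. destruct w as [w1 w2]. apply unit_disk_iff in Hw. rewrite Cmod_sqr.
  set (ux := dx u (w1, w2)). set (uy := dy u (w1, w2)). set (g := Cmod (ux, uy)).
  pose proof (Cmod_sqr ux uy) as Hg2. fold g in Hg2.
  destruct (Req_dec g 0) as [Hg0|Hg0]; [rewrite Hg0, Rmult_0_r; lra|].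
  assert (Hcs : (ux / g) * (ux / g) + (uy / g) * (uy / g) = 1).
  { replace ((ux / g) * (ux / g) + (uy / g) * (uy / g)) with ((ux * ux + uy * uy) / (g * g))
      by (field; exact Hg0).
    rewrite <- Hg2. field. exact Hg0. }
  pose proof (chart_gradient_bound u _ _ _ _ _ _ Hu Hb (mob_polar_chart w1 w2 _ _ Hw Hcs)
                w1 w2 _ _ _ (mob_chart_center w1 w2 (ux / g) (uy / g))) as Hbound.
  fold ux uy in Hbound.
  replace (ux * (ux / g) + uy * (uy / g)) with g in Hbound; [lra|].
  replace (ux * (ux / g) + uy * (uy / g)) with ((ux * ux + uy * uy) / g) by (field; exact Hg0).
  rewrite <- Hg2. field. exact Hg0.
Qed.

(** * The upper bound *)

(* [Df(p) z = f_z(p) z + f_zbar(p) conj z]. *)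
Lemma Cmod_differential_le (f : C -> C) (p : C) (z1 z2 : R) :
  Cmod (dx (re_part f) p * z1 + dy (re_part f) p * z2,
        dx (im_part f) p * z1 + dy (im_part f) p * z2)
  <= (Cmod (f_z f p) + Cmod (f_zbar f p)) * Cmod (z1, z2).
Proof.
  replace (_, _) with (Cplus (Cmult (f_z f p) (z1, z2)) (Cmult (f_zbar f p) (Cconj (z1, z2))))
    by (unfold f_z, f_zbar, Cplus, Cmult, Cconj; simpl; f_equal; field).
  eapply Rle_trans; [apply Cmod_triangle|]. rewrite !Cmod_mult, Cmod_conj. lra.
Qed.

(* [f_z + conj f_zbar = u_x - i u_y]. *)
Lemma Cmod_f_z_sub_f_zbar_le (f : C -> C) (p : C) :
  Cmod (f_z f p) - Cmod (f_zbar f p) <= Cmod (dx (re_part f) p, dy (re_part f) p).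
Proof.
  replace (f_z f p) with (Cplus (dx (re_part f) p, - dy (re_part f) p) (Copp (Cconj (f_zbar f p))))
    by (unfold f_z, f_zbar, Cplus, Copp, Cconj; simpl; f_equal; field).
  eapply Rle_trans; [apply Rplus_le_compat_r, Cmod_triangle|].
  rewrite Cmod_opp, Cmod_conj.
  replace (Cmod (dx (re_part f) p, - dy (re_part f) p))
    with (Cmod (dx (re_part f) p, dy (re_part f) p)); [lra|].
  unfold Cmod; simpl. f_equal. ring.
Qed.

Lemma HQR_differential_bound (K : R) (f : C -> C) (p : C) (z1 z2 : R) :
  HQR K unit_disk strip f -> unit_disk p ->
  Cmod (dx (re_part f) p * z1 + dy (re_part f) p * z2,
        dx (im_part f) p * z1 + dy (im_part f) p * z2)
  <= 4 / PI * K / (1 - Cmod p * Cmod p) * Cmod (z1, z2).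
Proof.
  intros (Hstrip & Hu & _ & _ & _ & Hqr) Hp. pose proof PI_RGT_0.
  destruct (Hqr p Hp) as [Hsp Hdil].
  set (A := Cmod (f_z f p)) in *. set (B := Cmod (f_zbar f p)) in *.
  assert (HAB : A + B <= K * (A - B)).
  { apply (Rmult_le_compat_r (A - B)) in Hdil; [|lra].
    unfold Rdiv in Hdil. rewrite Rmult_assoc, Rinv_l in Hdil by lra. lra. }
  assert (HK : 0 <= K).
  { pose proof (Cmod_ge_0 (f_zbar f p)) as HB0. fold B in HB0. nra. }
  assert (Hb : forall z, unit_disk z -> Rabs (re_part f z) <= 1).
  { intros z Hz. destruct (Hstrip z Hz). apply Rabs_le. unfold re_part. lra. }
  pose proof (harmonic_gradient_bound _ _ Hu Hb Hp) as Hgrad.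
  pose proof (Cmod_f_z_sub_f_zbar_le f p) as Hfz. fold A B in Hfz.
  assert (HD : 0 < 1 - Cmod p * Cmod p) by (pose proof (Cmod_ge_0 p); unfold unit_disk in Hp; nra).
  assert (HG : A - B <= 4 / (PI * (1 - Cmod p * Cmod p))).
  { apply Rle_trans with (Cmod (dx (re_part f) p, dy (re_part f) p)); [exact Hfz|].
    apply (Rmult_le_reg_l (PI * (1 - Cmod p * Cmod p))); [apply Rmult_lt_0_compat; lra|].
    replace (PI * (1 - Cmod p * Cmod p) * (4 / (PI * (1 - Cmod p * Cmod p)))) with 4
      by (field; lra).
    exact Hgrad. }
  eapply Rle_trans; [apply Cmod_differential_le|]. fold A B.
  replace (4 / PI * K / (1 - Cmod p * Cmod p)) with (K * (4 / (PI * (1 - Cmod p * Cmod p))))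
    by (field; lra).
  apply Rmult_le_compat_r; [apply Cmod_ge_0|].
  apply Rle_trans with (K * (A - B)); [exact HAB | apply Rmult_le_compat_l; assumption].
Qed.

(* Integrate the differential bound along the segment [0, z], in the direction of [f z]. *)
Lemma HQR_strip_bound (K : R) (f : C -> C) :
  HQR K unit_disk strip f -> f (0, 0) = (0, 0) ->
  forall z, unit_disk z -> Cmod (f z) <= 4 / PI * K * artanh (Cmod z).
Proof.
  intros Hf H0 [z1 z2] Hz. pose proof PI_RGT_0.
  pose proof Hf as (_ & _ & _ & Cu & Cv & _).
  set (rho := Cmod (z1, z2)).
  assert (Hrho : 0 <= rho < 1) by (split; [apply Cmod_ge_0 | exact Hz]).
  set (u := re_part f). set (v := im_part f).
  destruct (exists_unit_aligned (u (z1, z2)) (v (z1, z2))) as (e1 & e2 & He & Hdot & _).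
  assert (Hnorm : forall t, 0 <= t <= 1 -> Cmod (t * z1, t * z2) = t * rho).
  { intros t Ht. rewrite Cmod_scale, Rabs_pos_eq by lra. reflexivity. }
  assert (Hray : forall t, 0 <= t <= 1 -> unit_disk (t * z1, t * z2)).
  { intros t Ht. unfold unit_disk. rewrite Hnorm by exact Ht. nra. }
  assert (Hlin : forall a t, is_derive (fun t => t * a) t a).
  { intros a t. eapply is_derive_eq;
      [apply is_derive_mult_const_r, is_derive_Reals, derivable_pt_lim_id | ring]. }
  set (h t := e1 * u (t * z1, t * z2) + e2 * v (t * z1, t * z2)).
  set (psi t := 4 / PI * K * artanh (t * rho)).
  assert (Hinc : h 1 - h 0 <= psi 1 - psi 0).
  { apply (increment_le_of_derive_le h psi
      (fun t => e1 * (dx u (t * z1, t * z2) * z1 + dy u (t * z1, t * z2) * z2)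
                + e2 * (dx v (t * z1, t * z2) * z1 + dy v (t * z1, t * z2) * z2))
      (fun t => 4 / PI * K * (rho * / (1 - t * rho * (t * rho))))).
    intros t Ht. pose proof (Hray t Ht) as Hin. split; [|split].
    - unfold h. apply is_derive_Rplus; apply is_derive_scal;
        apply (is_derive_comp_C1 _ (fun t => t * z1) (fun t => t * z2)); auto.
    - unfold psi. apply is_derive_scal. apply (is_derive_comp artanh (fun t => t * rho)); [|apply Hlin].
      apply is_derive_artanh. nra.
    - eapply Rle_trans; [apply dot_le_Cmod, He|].
      eapply Rle_trans; [apply (HQR_differential_bound K f _ z1 z2 Hf Hin)|].
      fold rho. rewrite Hnorm by exact Ht.
      assert (0 <= t * rho <= rho) by (split; nra).
      assert (0 < 1 - t * rho * (t * rho)) by nra. right. field. lra. }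
  unfold h, psi in Hinc. rewrite !Rmult_1_l, !Rmult_0_l, artanh_0, Rmult_0_r in Hinc.
  replace (e1 * u (0, 0) + e2 * v (0, 0)) with 0 in Hinc
    by (unfold u, v, re_part, im_part; rewrite H0; simpl; ring).
  replace (Cmod (f (z1, z2))) with (e1 * u (z1, z2) + e2 * v (z1, z2))
    by (rewrite Hdot; unfold u, v, re_part, im_part; now destruct (f (z1, z2))).
  fold rho. lra.
Qed.

(** * The extremal map *)

Section StripMap.

Variables (c s : R).

Definition rot_re (x y : R) : R := c * x + s * y.
Definition rot_im (x y : R) : R := - s * x + c * y.

(* [strip_re + i strip_im] is [-(2 i / PI) log ((1 + w) / (1 - w))], the conformal map of the
   disk onto the strip, at [w = rot_re + i rot_im = (c - i s) (x + i y)]. *)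
Definition strip_re (x y : R) : R :=
  2 / PI * atan (2 * rot_im x y / (1 - rot_re x y * rot_re x y - rot_im x y * rot_im x y)).
Definition strip_im (x y : R) : R :=
  - (1 / PI) * ln (((1 + rot_re x y) * (1 + rot_re x y) + rot_im x y * rot_im x y) /
                   ((1 - rot_re x y) * (1 - rot_re x y) + rot_im x y * rot_im x y)).

(* [sq_re + i sq_im = 1 - w^2]; the complex derivative [strip_d1 + i strip_d2] of the map
   is [-(4 i / PI) (c - i s) / (1 - w^2)], and [strip_dd1 + i strip_dd2] is the next one. *)
Definition sq_re (x y : R) : R := 1 - rot_re x y * rot_re x y + rot_im x y * rot_im x y.
Definition sq_im (x y : R) : R := - 2 * rot_re x y * rot_im x y.
Definition sq_norm2 (x y : R) : R := sq_re x y * sq_re x y + sq_im x y * sq_im x y.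
Definition strip_d1 (x y : R) : R := 4 / PI * (- sq_im x y * c - sq_re x y * s) / sq_norm2 x y.
Definition strip_d2 (x y : R) : R := 4 / PI * (- sq_re x y * c + sq_im x y * s) / sq_norm2 x y.
Definition sq2_re (x y : R) : R := sq_re x y * sq_re x y - sq_im x y * sq_im x y.
Definition sq2_im (x y : R) : R := 2 * sq_re x y * sq_im x y.
Definition strip_dd_a (x y : R) : R :=
  4 / PI * 2 * (rot_im x y * sq2_re x y - rot_re x y * sq2_im x y) / (sq_norm2 x y * sq_norm2 x y).
Definition strip_dd_b (x y : R) : R :=
  4 / PI * (-2) * (rot_re x y * sq2_re x y + rot_im x y * sq2_im x y) / (sq_norm2 x y * sq_norm2 x y).
Definition strip_dd1 (x y : R) : R := strip_dd_a x y * (c * c - s * s) + strip_dd_b x y * (2 * c * s).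
Definition strip_dd2 (x y : R) : R := strip_dd_b x y * (c * c - s * s) - strip_dd_a x y * (2 * c * s).

Hypothesis cs_unit : c * c + s * s = 1.

Lemma sq_norm2_eq (x y : R) : sq_norm2 x y =
  ((1 - rot_re x y) * (1 - rot_re x y) + rot_im x y * rot_im x y) *
  ((1 + rot_re x y) * (1 + rot_re x y) + rot_im x y * rot_im x y).
Proof. unfold sq_norm2, sq_re, sq_im. ring. Qed.

Lemma strip_map_nondegenerate (x y : R) : unit_disk (x, y) ->
  1 - rot_re x y * rot_re x y - rot_im x y * rot_im x y <> 0 /\ sq_norm2 x y <> 0 /\
  0 < (1 + rot_re x y) * (1 + rot_re x y) + rot_im x y * rot_im x y /\
  0 < (1 - rot_re x y) * (1 - rot_re x y) + rot_im x y * rot_im x y.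
Proof.
  intros Hd. apply unit_disk_iff in Hd.
  assert (E : rot_re x y * rot_re x y + rot_im x y * rot_im x y = (c * c + s * s) * (x * x + y * y))
    by (unfold rot_re, rot_im; ring).
  rewrite cs_unit, Rmult_1_l in E.
  set (X := rot_re x y) in *. set (Y := rot_im x y) in *.
  assert (0 < (1 + X) * (1 + X) + Y * Y) by nra.
  assert (0 < (1 - X) * (1 - X) + Y * Y) by nra.
  rewrite sq_norm2_eq. fold X Y.
  split; [lra|split; [apply Rgt_not_eq, Rmult_lt_0_compat|split]]; assumption.
Qed.

Lemma strip_map_cauchy_riemann (x y : R) : unit_disk (x, y) ->
  cauchy_riemann_partials strip_re strip_im strip_d1 strip_d2 x y /\
  cauchy_riemann_partials strip_d1 strip_d2 strip_dd1 strip_dd2 x y.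
Proof.
  intros Hd. destruct (strip_map_nondegenerate x y Hd) as (H1 & H2 & H3 & H4).
  pose proof PI_RGT_0.
  unfold cauchy_riemann_partials, strip_re, strip_im, strip_d1, strip_d2, strip_dd1, strip_dd2,
    strip_dd_a, strip_dd_b, sq2_re, sq2_im, sq_norm2, sq_re, sq_im in *.
  unfold rot_re, rot_im in *.
  split; (split; [|split; [|split]]); auto_derive;
    solve [repeat split; try lra; try (apply Rdiv_lt_0_compat; lra);
             try (repeat apply Rmult_integral_contrapositive_currified; auto; lra)
          | field; repeat split; try lra;
              try (repeat apply Rmult_integral_contrapositive_currified; auto; lra)].
Qed.

Lemma strip_map_continuity (x y : R) : unit_disk (x, y) ->
  continuity_2d_pt strip_re x y /\ continuity_2d_pt strip_im x y /\
  continuity_2d_pt strip_d1 x y /\ continuity_2d_pt strip_d2 x y /\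
  continuity_2d_pt strip_dd1 x y /\ continuity_2d_pt strip_dd2 x y.
Proof.
  intros Hd. destruct (strip_map_nondegenerate x y Hd) as (H1 & H2 & H3 & H4).
  pose proof PI_RGT_0.
  assert (sq_norm2 x y * sq_norm2 x y <> 0) by now apply Rmult_integral_contrapositive.
  unfold strip_re, strip_im, strip_d1, strip_d2, strip_dd1, strip_dd2, strip_dd_a, strip_dd_b,
    sq2_re, sq2_im, sq_norm2, sq_re, sq_im, Rdiv in *.
  unfold rot_re, rot_im in *.
  repeat split; continuity_2d;
    solve [lra | apply Rgt_not_eq; lra | apply Rmult_lt_0_compat; [|apply Rinv_0_lt_compat]; lra].
Qed.

End StripMap.

Definition strip_extremal (K c s : R) : C -> C :=
  fun p => (strip_re c s (fst p) (snd p), K * strip_im c s (fst p) (snd p)).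

Section StripExtremal.

Variables (K c s : R).
Hypothesis cs_unit : c * c + s * s = 1.

Lemma strip_extremal_harmonic :
  harmonic_on unit_disk (re_part (strip_extremal K c s)) /\
  harmonic_on unit_disk (im_part (strip_extremal K c s)) /\
  forall p, unit_disk p ->
    dx (re_part (strip_extremal K c s)) p = strip_d1 c s (fst p) (snd p) /\
    dy (re_part (strip_extremal K c s)) p = - strip_d2 c s (fst p) (snd p) /\
    dx (im_part (strip_extremal K c s)) p = K * strip_d2 c s (fst p) (snd p) /\
    dy (im_part (strip_extremal K c s)) p = K * strip_d1 c s (fst p) (snd p).
Proof.
  destruct (harmonic_on_of_partials (strip_re c s) (strip_d1 c s) (fun x y => - strip_d2 c s x y)
    (strip_dd1 c s) (fun x y => - strip_dd2 c s x y) (fun x y => - strip_dd2 c s x y)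
    (fun x y => - strip_dd1 c s x y)) as [Hre Ere].
  { intros x y Hd.
    destruct (strip_map_cauchy_riemann c s cs_unit x y Hd) as ((? & ? & ? & ?) & (? & ? & ? & ?)).
    destruct (strip_map_continuity c s cs_unit x y Hd) as (? & ? & ? & ? & ? & ?).
    repeat match goal with |- _ /\ _ => split end;
      first [assumption | apply is_derive_Ropp; assumption
            | apply continuity_2d_pt_opp; assumption | ring]. }
  destruct (harmonic_on_of_partials (fun x y => K * strip_im c s x y)
    (fun x y => K * strip_d2 c s x y) (fun x y => K * strip_d1 c s x y)
    (fun x y => K * strip_dd2 c s x y) (fun x y => K * strip_dd1 c s x y)
    (fun x y => K * strip_dd1 c s x y) (fun x y => K * - strip_dd2 c s x y)) as [Him Eim].
  { intros x y Hd.
    destruct (strip_map_cauchy_riemann c s cs_unit x y Hd) as ((? & ? & ? & ?) & (? & ? & ? & ?)).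
    destruct (strip_map_continuity c s cs_unit x y Hd) as (? & ? & ? & ? & ? & ?).
    repeat match goal with |- _ /\ _ => split end;
      first [apply is_derive_scal; assumption | ring
            | apply continuity_2d_pt_mult;
                [apply continuity_2d_pt_const | try apply continuity_2d_pt_opp; assumption]]. }
  split; [exact Hre | split; [exact Him|]].
  intros p Hp. destruct (Ere p Hp), (Eim p Hp). now repeat match goal with |- _ /\ _ => split end.
Qed.

Lemma Cmod_strip_d_pos (x y : R) : unit_disk (x, y) ->
  0 < Cmod (strip_d1 c s x y, strip_d2 c s x y).
Proof.
  intros Hd. destruct (strip_map_nondegenerate c s cs_unit x y Hd) as (_ & HS & H3 & H4).
  pose proof PI_RGT_0.
  assert (HS' : 0 < sq_norm2 c s x y) by (rewrite sq_norm2_eq; now apply Rmult_lt_0_compat).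
  assert (E : strip_d1 c s x y * strip_d1 c s x y + strip_d2 c s x y * strip_d2 c s x y
              = (4 / PI) * (4 / PI) / sq_norm2 c s x y).
  { unfold strip_d1, strip_d2.
    transitivity ((4 / PI) * (4 / PI) * (c * c + s * s) / sq_norm2 c s x y).
    - unfold sq_norm2 in *. field. lra.
    - rewrite cs_unit. field. lra. }
  pose proof (Cmod_ge_0 (strip_d1 c s x y, strip_d2 c s x y)).
  rewrite <- Cmod_sqr in E.
  assert (0 < 4 / PI * (4 / PI) / sq_norm2 c s x y)
    by (apply Rdiv_lt_0_compat; [apply Rmult_lt_0_compat; apply Rdiv_lt_0_compat|]; lra).
  nra.
Qed.

(* [f_z] and [f_zbar] are [(1 + K) / 2] and [(1 - K) / 2] times the derivative of the strip map
   (the latter conjugated), so the dilatation quotient is exactly [K]. *)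
Lemma strip_extremal_HQR : 1 <= K -> HQR K unit_disk strip (strip_extremal K c s).
Proof.
  intros HK. pose proof PI_RGT_0.
  destruct strip_extremal_harmonic as (Hre & Him & E).
  split; [|split; [exact Hre | split; [exact Him | split; [apply Hre | split; [apply Him|]]]]].
  - intros [x y] _. unfold strip, strip_extremal, strip_re; simpl.
    set (a := atan _). pose proof (atan_bound (2 * rot_im c s x y /
      (1 - rot_re c s x y * rot_re c s x y - rot_im c s x y * rot_im c s x y))) as Ha. fold a in Ha.
    split; apply (Rmult_lt_reg_l (PI / 2)); try lra;
      replace (PI / 2 * (2 / PI * a)) with a by (field; lra); lra.
  - intros p Hp. destruct (E p Hp) as (E1 & E2 & E3 & E4).
    unfold f_z, f_zbar. rewrite E1, E2, E3, E4.
    pose proof (Cmod_strip_d_pos (fst p) (snd p) ltac:(now destruct p)) as Hl.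
    set (l1 := strip_d1 c s (fst p) (snd p)) in *. set (l2 := strip_d2 c s (fst p) (snd p)) in *.
    replace ((l1 + K * l1) / 2, (K * l2 - - l2) / 2) with ((1 + K) / 2 * l1, (1 + K) / 2 * l2)
      by (f_equal; field).
    replace ((l1 - K * l1) / 2, (K * l2 + - l2) / 2) with ((K - 1) / 2 * (- l1), (K - 1) / 2 * l2)
      by (f_equal; field).
    rewrite !Cmod_scale, (Rabs_pos_eq ((1 + K) / 2)), (Rabs_pos_eq ((K - 1) / 2)) by lra.
    replace (Cmod (- l1, l2)) with (Cmod (l1, l2)) by (unfold Cmod; simpl; f_equal; ring).
    split; [nra|].
    replace (((1 + K) / 2 * Cmod (l1, l2) + (K - 1) / 2 * Cmod (l1, l2))
             / ((1 + K) / 2 * Cmod (l1, l2) - (K - 1) / 2 * Cmod (l1, l2))) with K by (field; lra).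
    lra.
Qed.

Lemma strip_extremal_0 : strip_extremal K c s (0, 0) = (0, 0).
Proof.
  unfold strip_extremal, strip_re, strip_im, rot_re, rot_im; simpl.
  replace (c * 0 + s * 0) with 0 by ring. replace (- s * 0 + c * 0) with 0 by ring.
  replace (2 * 0 / (1 - 0 * 0 - 0 * 0)) with 0 by field.
  replace (((1 + 0) * (1 + 0) + 0 * 0) / ((1 - 0) * (1 - 0) + 0 * 0)) with 1 by field.
  rewrite atan_0, ln_1. f_equal; ring.
Qed.

Lemma Cmod_strip_extremal_on_axis (x y : R) : 0 <= K -> unit_disk (x, y) ->
  rot_re c s x y = Cmod (x, y) -> rot_im c s x y = 0 ->
  Cmod (strip_extremal K c s (x, y)) = 4 / PI * K * artanh (Cmod (x, y)).
Proof.
  intros HK Hz HX HY. pose proof PI_RGT_0.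
  unfold strip_extremal, strip_re, strip_im; simpl. rewrite HX, HY.
  set (r := Cmod (x, y)) in *.
  assert (Hr : 0 <= r < 1) by (split; [apply Cmod_ge_0 | exact Hz]).
  replace (2 * 0 / (1 - r * r - 0 * 0)) with 0 by (field; nra). rewrite atan_0, Rmult_0_r.
  replace (((1 + r) * (1 + r) + 0 * 0) / ((1 - r) * (1 - r) + 0 * 0))
    with (((1 + r) / (1 - r)) * ((1 + r) / (1 - r))) by (field; lra).
  assert (Hq : 0 < (1 + r) / (1 - r)) by (apply Rdiv_lt_0_compat; lra).
  rewrite ln_mult by assumption.
  replace (K * (- (1 / PI) * (ln ((1 + r) / (1 - r)) + ln ((1 + r) / (1 - r)))))
    with (- (4 / PI * K * artanh r)) by (unfold artanh; field; lra).
  rewrite Cmod_0_l, Rabs_Ropp. apply Rabs_pos_eq.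
  assert (0 <= artanh r).
  { unfold artanh. apply Rmult_le_pos; [|lra]. rewrite <- ln_1. apply ln_le; [lra|].
    apply (Rmult_le_reg_r (1 - r)); [lra|]. unfold Rdiv. rewrite Rmult_assoc, Rinv_l; lra. }
  apply Rmult_le_pos; [|assumption]. apply Rmult_le_pos; [|assumption].
  apply Rlt_le, Rdiv_lt_0_compat; lra.
Qed.

End StripExtremal.

Lemma HQR_strip_bound_sharp (K : R) : 1 <= K -> forall z, unit_disk z ->
  exists g, HQR K unit_disk strip g /\ g (0, 0) = (0, 0) /\
    Cmod (g z) = 4 / PI * K * artanh (Cmod z).
Proof.
  intros HK [x y] Hz.
  destruct (exists_unit_aligned x y) as (c & s & Hcs & HX & HY).
  exists (strip_extremal K c s). split; [|split].
  - now apply strip_extremal_HQR.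
  - now apply strip_extremal_0.
  - apply Cmod_strip_extremal_on_axis; try assumption; lra.
Qed.

Theorem theorem7 (K : R) (HK : 1 <= K) :
  (forall f : C -> C, HQR K unit_disk strip f -> f (0, 0) = (0, 0) ->
     forall z : C, unit_disk z -> Cmod (f z) <= 4 / PI * K * artanh (Cmod z)) /\
  (forall z : C, unit_disk z ->
     exists g : C -> C, HQR K unit_disk strip g /\ g (0, 0) = (0, 0) /\
       Cmod (g z) = 4 / PI * K * artanh (Cmod z)).
Proof.
  split.
  - apply HQR_strip_bound.
  - now apply HQR_strip_bound_sharp.
Qed.
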